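(* Let $X,X_1,X_2,\dots$ be i.i.d. nonnegative random variables with $\mathbb{E}[X]>0$ and $\mathbb{E}[X^2]<\infty$, and let $N_X(x)=\max\{k\ge0:\sum_{n=1}^kX_n\le x\}$ for $x\in\mathbb{R}$. Then for every $\delta>0$ there exist finite constants $\widetilde C=\widetilde C(\delta)>0$ and $\tilde c=\tilde c(\delta)>0$ such that $$\mathbb{P}\Big(N_X(x)-\frac{x}{\mathbb{E}[X]}>u\Big)\le\widetilde C\exp\{-\tilde c\,u^2/x\}\qquad\text{for all }x\ge0,\ 0\le u\le\delta x.$$ *)

From HB Require Import structures.
From mathcomp Require Import all_boot all_order all_algebra.
From mathcomp Require Import all_classical all_reals all_analysis.
Set Implicit Arguments. Unset Strict Implicit. Unset Printing Implicit Defensive.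
Import Order.TTheory GRing.Theory Num.Theory.
Local Open Scope classical_set_scope.
Local Open Scope ring_scope.

Definition mutually_independent d (T : measurableType d) (R : realType)
  (P : probability T R) (X : nat -> {RV P >-> R}) : Prop :=
  forall (s : seq nat) (B : nat -> set R),
    uniq s -> (forall i, measurable (B i)) ->
    P (\bigcap_(i in [set` s]) (X i @^-1` B i)) =
      (\prod_(i <- s) P (X i @^-1` B i))%E.

Definition identically_distributed d (T : measurableType d) (R : realType)
  (P : probability T R) (X : nat -> {RV P >-> R}) : Prop :=
  forall n, distribution P (X n) = distribution P (X 0%N).

(* Partial sum S_k(w) = X_1(w)+...+X_k(w), where the paper's X_n is X (n-1). *)
Definition partial_sum d (T : measurableType d) (R : realType)
  (P : probability T R) (X : nat -> {RV P >-> R}) (k : nat) (w : T) : R :=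
  \sum_(n < k) X n w.

(* Renewal counting variable N_X(x)(w) = max{k >= 0 : S_k(w) <= x}, taken as a
   supremum in the extended reals (+oo if unbounded, -oo if empty). *)
Definition renewal_count d (T : measurableType d) (R : realType)
  (P : probability T R) (X : nat -> {RV P >-> R}) (x : R) (w : T) : \bar R :=
  ereal_sup [set (k%:R)%:E | k in [set k : nat | partial_sum X k w <= x]].

From HB Require Import structures.
From mathcomp Require Import all_boot all_order all_algebra.
From mathcomp Require Import all_classical all_reals all_analysis.
From mathcomp Require Import ring lra zify measurable_realfun.
Set Implicit Arguments. Unset Strict Implicit. Unset Printing Implicit Defensive.
Import Order.TTheory GRing.Theory Num.Theory.
Local Open Scope classical_set_scope.
Local Open Scope ring_scope.

(* Let k = floor (x / mu + u) + 1.  Then N_X(x) - x / mu > u iff S_k <= x, a lower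
   deviation of a sum of nonnegative i.i.d. variables, which is bounded by Chernoff:
   P(S_k <= x) <= e^(lam x) (E e^(-lam X))^k, and E e^(-lam X) <= 1 - lam mu + lam^2 E[X^2]
   by e^(-z) <= 1 - z + z^2.  Independence is only assumed for events, so e^(-lam X_i) is
   replaced by a staircase function of mesh at most lam^2 lying above it: a product of
   staircases expands into a combination of indicators of intersections of events, whose
   expectation factors.  The choice lam = t / (2 k (E[X^2] + 1)) with t = k mu - x >= u mu
   gives exp(-t^2 / (4 k (E[X^2] + 1))), at most exp(-c u^2 / x) since k <= (1/mu + delta + 1) x
   when x >= 1; for x < 1 the bound is trivial because u^2 / x <= delta^2. *)

Section Staircase.
Variable R : realType.

Definition staircase (M : nat) (y : R) : R :=
  M%:R^-1 * \sum_(j < M) (j%:R / M%:R <= y)%R%:R.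

Lemma sum_ord_leq (M n : nat) : \sum_(j < M) ((j <= n)%N : nat) = minn M n.+1.
Proof.
elim: M => [|M IH]; first by rewrite big_ord0.
by rewrite big_ord_recr /= IH; case: (leqP M n) => h /=; lia.
Qed.

Lemma staircase_bounds (M : nat) (y : R) : (0 < M)%N -> 0 <= y -> y <= 1 ->
  y <= staircase M y <= y + M%:R^-1.
Proof.
move=> M0 y0 y1; have Mp : 0 < (M%:R : R) by rewrite ltr0n.
have yM0 : 0 <= y * M%:R by rewrite mulr_ge0 // ltW.
rewrite /staircase; set n := Num.truncn (y * M%:R).
have /andP[ny yn] := truncn_itv yM0; rewrite -/n -natr1 in ny yn.
have -> : \sum_(j < M) (j%:R / M%:R <= y)%R%:R = (minn M n.+1)%:R :> R.
  rewrite -sum_ord_leq natr_sum; apply: eq_bigr => j _.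
  by rewrite ler_pdivrMr // -truncn_ge_nat.
rewrite mulrC ler_pdivlMr // ler_pdivrMr // mulrDl mulVf ?gt_eqF //.
have : (minn M n.+1)%:R <= n.+1%:R :> R by rewrite ler_nat geq_minr.
rewrite -natr1 => mn; apply/andP; split; last by lra.
case: (leqP M n.+1) => h; last by rewrite -natr1; lra.
by rewrite -[leRHS]mul1r ler_wpM2r // ltW.
Qed.

Lemma staircase_comp_indic (M : nat) (f : R -> R) (y : R) :
  staircase M (f y) = \sum_(j < M) M%:R^-1 * \1_(f @^-1` [set z | j%:R / M%:R <= z]) y.
Proof.
rewrite /staircase mulr_sumr; apply: eq_bigr => j _; congr (_ * _).
by rewrite indicE; case: (boolP (_ <= _)) => h; [rewrite mem_set | rewrite memNset //=; apply/negP].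
Qed.

End Staircase.

Lemma expRN_le_quadratic (R : realType) (z : R) : 0 <= z -> expR (- z) <= 1 - z + z ^+ 2.
Proof.
move=> z0; have p1 : 0 < 1 + z by lra.
apply: (@le_trans _ _ (1 + z)^-1).
  by rewrite expRN lef_pV2 ?posrE ?expR_gt0 // expR_ge1Dx.
have h : (1 + z)^-1 * (1 + z) = 1 by rewrite mulVf // gt_eqF.
have i0 : 0 <= (1 + z)^-1 by rewrite invr_ge0 ltW.
have : 0 <= (1 + z)^-1 * z ^+ 3 by rewrite mulr_ge0 // exprn_ge0.
nra.
Qed.

Lemma prod_indic (T : Type) (I : eqType) (R : pzRingType) (s : seq I)
    (A : I -> set T) (w : T) :
  \prod_(i <- s) \1_(A i) w = \1_(\bigcap_(i in [set` s]) A i) w :> R.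
Proof.
elim: s => [|i s IH].
  rewrite big_nil (_ : [set` [::]] = set0) ?bigcap_set0 ?indicT //.
  by apply/seteqP; split => x.
rewrite big_cons IH (_ : [set` i :: s] = i |` [set` s]) ?bigcap_setU1 ?indicI //.
apply/seteqP; split => j /=; rewrite in_cons.
- by case/orP => [/eqP|]; [left|right].
- by case=> [->|->]; rewrite ?eqxx ?orbT.
Qed.

Lemma integral_sum_scaled_indic d (T : measurableType d) (R : realType)
    (mu : measure T R) (I : finType) (c : I -> R) (A : I -> set T) :
  (forall i, 0 <= c i) -> (forall i, measurable (A i)) ->
  (\int[mu]_w (\sum_(i : I) c i * \1_(A i) w)%:E = \sum_(i : I) (c i)%:E * mu (A i))%E.
Proof.
move=> c0 mA.
have mI i : measurable_fun setT (fun w => (\1_(A i) w : R)%:E).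
  by apply/measurable_EFinP; exact: measurable_indic.
have I0 i w : (0 <= (\1_(A i) w : R)%:E)%E by rewrite lee_fin indicE ler0n.
under eq_integral => w _ do rewrite -sumEFin.
rewrite ge0_integral_sum //; first last.
- by move=> i w _; rewrite EFinM mule_ge0 // lee_fin.
- move=> i; under eq_fun => w do rewrite EFinM.
  by apply: emeasurable_funM => //; exact: measurable_cst.
apply: eq_bigr => i _; under eq_integral => w _ do rewrite EFinM.
by rewrite ge0_integralZl ?lee_fin // integral_indic // setIT.
Qed.

Lemma integral_le_quadratic_moments d (T : measurableType d) (R : realType)
    (P : probability T R) (Y g : T -> R) (a b l m s e : R) :
  measurable_fun setT Y -> measurable_fun setT g ->
  (forall w, 0 <= Y w) -> (forall w, 0 <= g w) -> 0 <= a -> 0 <= b -> 0 <= l ->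
  (\int[P]_w (Y w)%:E = m%:E)%E -> (\int[P]_w (Y w ^+ 2)%:E = s%:E)%E ->
  (\int[P]_w (g w)%:E = e%:E)%E ->
  (forall w, g w + l * Y w <= a + b * Y w ^+ 2) -> e + l * m <= a + b * s.
Proof.
move=> mY mg Y0 g0 a0 b0 l0 EY EY2 Eg gY.
have mYE : measurable_fun setT (fun w => (Y w)%:E) by exact/measurable_EFinP.
have mY2E : measurable_fun setT (fun w => (Y w ^+ 2)%:E).
  by apply/measurable_EFinP; exact: measurable_funX.
have ge0E (f : T -> R) : (forall w, 0 <= f w) -> forall w, setT w -> (0 <= (f w)%:E)%E.
  by move=> f0 w _; rewrite lee_fin.
have lhs : (\int[P]_w (g w + l * Y w)%:E = (e + l * m)%:E)%E.
  under eq_integral => w _ do rewrite EFinD EFinM.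
  rewrite ge0_integralD //; first last.
  - by apply: emeasurable_funM => //; exact: measurable_cst.
  - by move=> w _; rewrite mule_ge0 ?lee_fin.
  - exact/measurable_EFinP.
  - exact: ge0E.
  by rewrite ge0_integralZl ?lee_fin //; [rewrite Eg EY -EFinM -EFinD | exact: ge0E].
have rhs : (\int[P]_w (a + b * Y w ^+ 2)%:E = (a + b * s)%:E)%E.
  under eq_integral => w _ do rewrite EFinD EFinM.
  have bY2 : measurable_fun setT (fun w => (b%:E * (Y w ^+ 2)%:E)%E).
    by apply: emeasurable_funM => //; exact: measurable_cst.
  rewrite (ge0_integralD _ _ (ge0E _ (fun=> a0)) (measurable_cst _)) //; last first.
    by move=> w _; rewrite mule_ge0 ?lee_fin ?sqr_ge0.
  have P1 : (P : measure T R) setT = 1%E := probability_setT P.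
  rewrite integral_cst // P1 mule1 ge0_integralZl ?lee_fin //.
    by rewrite EY2 -EFinM -EFinD.
  by apply: ge0E => w; rewrite sqr_ge0.
rewrite -lee_fin -lhs -rhs; apply: ge0_le_integral => //.
- by apply: ge0E => w; rewrite addr_ge0 // mulr_ge0.
- apply/measurable_EFinP; apply: measurable_funD => //.
  by apply: measurable_funM => //; exact: measurable_cst.
- apply/measurable_EFinP; apply: measurable_funD; first exact: measurable_cst.
  by apply: measurable_funM; [exact: measurable_cst | exact: measurable_funX].
- by move=> w _; rewrite lee_fin gY.
Qed.

Lemma expectation_le_1Dsqr d (T : measurableType d) (R : realType)
    (P : probability T R) (Y : T -> R) :
  measurable_fun setT Y -> (forall w, 0 <= Y w) ->
  ('E_P[Y] <= 1 + 'E_P[(fun w => (Y w ^+ 2)%R)])%E.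
Proof.
move=> mY Y0; rewrite unlock.
have mY2 : measurable_fun setT (fun w => (Y w ^+ 2)%:E).
  by apply/measurable_EFinP; exact: measurable_funX.
have P1 : (P : measure T R) setT = 1%E := probability_setT P.
have rhs : (\int[P]_w (1 + Y w ^+ 2)%:E = 1 + \int[P]_w (Y w ^+ 2)%:E)%E.
  under eq_integral => w _ do rewrite EFinD.
  rewrite ge0_integralD //; last by move=> w _; rewrite lee_fin sqr_ge0.
  by rewrite integral_cst // P1 mul1e.
rewrite -rhs; apply: ge0_le_integral => //.
- by move=> w _; rewrite lee_fin.
- exact/measurable_EFinP.
- by apply/measurable_EFinP; apply: measurable_funD => //; exact: measurable_funX.
- by move=> w _; rewrite lee_fin; have := Y0 w; nra.
Qed.

Section RenewalExponent.
Variable R : realType.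

Definition renewal_rate (mu s delta : R) := mu ^+ 2 / (4 * s * (mu^-1 + delta + 1)).

Lemma renewal_rate_gt0 (mu s delta : R) : 0 < mu -> 0 < s -> 0 < delta ->
  0 < renewal_rate mu s delta.
Proof.
move=> mu0 s0 d0; have := invr_gt0 mu; rewrite mu0 => mu'0.
by rewrite divr_gt0 ?exprn_gt0 // !mulr_gt0 // addr_gt0 // addr_gt0.
Qed.

(* For [x = 0] this uses [u ^+ 2 / 0 = 0]. *)
Lemma sqr_div_le_small (delta x u : R) : 0 <= x <= 1 -> 0 <= u <= delta * x ->
  u ^+ 2 / x <= delta ^+ 2.
Proof.
move=> /andP[x0 x1] /andP[u0 ux]; have [->|x_neq0] := eqVneq x 0.
  by rewrite invr0 mulr0 sqr_ge0.
have x_gt0 : 0 < x by rewrite lt0r x_neq0.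
rewrite ler_pdivrMr //; apply: (@le_trans _ _ ((delta * x) ^+ 2)).
  by rewrite lerXn2r ?nnegrE // (le_trans u0).
by rewrite exprMn ler_wpM2l ?sqr_ge0 // expr2 ler_piMl.
Qed.

Lemma renewal_exponent_le (mu s delta x u : R) (k : nat) :
  0 < mu -> 0 < s -> 0 < delta -> 1 <= x -> 0 <= u -> u <= delta * x ->
  x / mu + u < k%:R -> k%:R <= x / mu + u + 1 ->
  renewal_rate mu s delta * u ^+ 2 / x <= (k%:R * mu - x) ^+ 2 / (4 * k%:R * s).
Proof.
move=> mu0 s0 d0 x1 u0 ux k_gt k_le.
set K := mu^-1 + delta + 1; have K0 : 0 < K.
  by have := invr_gt0 mu; rewrite mu0 /K => mu'0; lra.
have x0 : 0 < x by lra.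
have k0 : 0 < k%:R :> R by apply: le_lt_trans k_gt; rewrite addr_ge0 // divr_ge0 // ltW.
have xmu : x / mu * mu = x by rewrite divfK // gt_eqF.
have t_ge : mu * u <= k%:R * mu - x.
  have : (x / mu + u) * mu <= k%:R * mu by rewrite ler_pM2r // ltW.
  by rewrite mulrDl xmu; lra.
have k_leKx : k%:R <= K * x by rewrite /K !mulrDl mul1r mulrC; lra.
rewrite (_ : _ * _ / x = (mu * u) ^+ 2 / (4 * s * K * x)); last first.
  rewrite /renewal_rate /K exprMn; field.
  by rewrite !gt_eqF // ?addr_gt0 ?mulr_gt0.
rewrite ler_pdivrMr ?mulr_gt0 // mulrAC ler_pdivlMr ?mulr_gt0 //.
rewrite [X in _ <= X](_ : _ = (k%:R * mu - x) ^+ 2 * (4 * s * (K * x))); last by ring.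
rewrite [X in X <= _](_ : _ = (mu * u) ^+ 2 * (4 * s * k%:R)); last by ring.
apply: ler_pM.
- exact: sqr_ge0.
- by rewrite !mulr_ge0 // ltW.
- have mu_u : 0 <= mu * u by rewrite mulr_ge0 // ltW.
  by rewrite lerXn2r ?nnegrE // (le_trans mu_u).
- by rewrite ler_pM2l ?mulr_gt0.
Qed.

End RenewalExponent.

Lemma measurable_partial_sum_le d (T : measurableType d) (R : realType)
    (P : probability T R) (X : nat -> {RV P >-> R}) (k : nat) (x : R) :
  measurable [set w | partial_sum X k w <= x].
Proof.
rewrite -[X in measurable X]setTI.
apply: (measurable_fun_le (g := cst x)) => //; try exact: measurable_cst.
by rewrite /partial_sum; apply: measurable_sum => i; exact: measurable_funP.
Qed.

Section RenewalEvent.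
Variables (d : measure_display) (T : measurableType d) (R : realType).
Variables (P : probability T R) (X : nat -> {RV P >-> R}).
Hypothesis X_ge0 : forall n w, 0 <= X n w.

Lemma partial_sum_le (w : T) (a b : nat) : (a <= b)%N ->
  partial_sum X a w <= partial_sum X b w.
Proof.
move=> ab; rewrite /partial_sum -!(big_mkord xpredT (fun n => X n w)).
by rewrite (big_cat_nat (leq0n a) ab) /= lerDl sumr_ge0.
Qed.

Lemma renewal_count_gtE (x y : R) : 0 <= y ->
  [set w | (y%:E < renewal_count X x w)%E] =
  [set w | partial_sum X (Num.truncn y).+1 w <= x].
Proof.
move=> y0; have /andP[_ y_lt] := truncn_itv y0.
apply/seteqP; split => w /=.
- move=> /ereal_sup_gt[_ [k /= Skx <-]]; rewrite lte_fin => yk.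
  by apply: le_trans Skx; apply: partial_sum_le; rewrite truncn_lt_nat.
- move=> Skx; apply: (@lt_le_trans _ _ ((Num.truncn y).+1%:R)%:E); first by rewrite lte_fin.
  by apply: ereal_sup_ubound; exists (Num.truncn y).+1.
Qed.

End RenewalEvent.

Section IidEvents.
Variables (d : measure_display) (T : measurableType d) (R : realType).
Variables (P : probability T R) (X : nat -> {RV P >-> R}).
Hypotheses (indep : mutually_independent X) (ident : identically_distributed X).

Lemma probability_bigcap_iid (k : nat) (C : nat -> set R) :
  (forall i, measurable (C i)) ->
  P (\bigcap_(i in [set` iota 0 k]) X i @^-1` C i) =
    (\prod_(i < k) P (X 0%N @^-1` C i))%E.
Proof.
move=> mC; rewrite indep ?iota_uniq //.
have -> : iota 0 k = index_iota 0 k by rewrite /index_iota subn0.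
by rewrite big_mkord; apply: eq_bigr => i _; exact: (congr1 (fun m => m (C i)) (ident i)).
Qed.

Lemma integral_prod_scaled_indic_iid (k : nat) (J : finType) (c : J -> R)
    (B : J -> set R) :
  (forall j, 0 <= c j) -> (forall j, measurable (B j)) ->
  (\int[P]_w (\prod_(i < k) \sum_(j : J) c j * \1_(B j) (X i w))%:E =
    ((\sum_(j : J) c j * fine (P (X 0%N @^-1` B j))) ^+ k)%:E)%E.
Proof.
move=> c0 mB.
pose C (t : {ffun 'I_k -> J}) (i : nat) := if insub i is Some i' then B (t i') else setT.
have Ct t (i : 'I_k) : C t i = B (t i) by rewrite /C valK.
have mC t i : measurable (C t i) by rewrite /C; case: insub.
pose F t := \bigcap_(i in [set` iota 0 k]) X i @^-1` C t i.
have mF t : measurable (F t).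
  by apply: bigcap_measurableType => i _; exact: measurable_funPTI.
have expand w : \prod_(i < k) \sum_(j : J) c j * \1_(B j) (X i w) =
    \sum_(t : {ffun 'I_k -> J}) (\prod_(i < k) c (t i)) * \1_(F t) w.
  rewrite bigA_distr_bigA; apply: eq_bigr => t _; rewrite big_split /=; congr (_ * _).
  rewrite /F -prod_indic.
  have -> : iota 0 k = index_iota 0 k by rewrite /index_iota subn0.
  by rewrite big_mkord; apply: eq_bigr => i _; rewrite Ct.
under eq_integral => w _ do rewrite expand.
rewrite integral_sum_scaled_indic //; last by move=> t; apply: prodr_ge0.
have q_fin j : P (X 0%N @^-1` B j) = (fine (P (X 0%N @^-1` B j)))%:E.
  by rewrite fineK //; apply: fin_num_measure; exact: measurable_funPTI.
rewrite (eq_bigr (fun t : {ffun 'I_k -> J} =>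
  (\prod_(i < k) (c (t i) * fine (P (X 0%N @^-1` B (t i)))))%:E)).
  by rewrite sumEFin -[k in _ ^+ k]card_ord -prodr_const bigA_distr_bigA.
move=> t _; rewrite big_split /= EFinM; congr (_ * _)%E.
rewrite -prodEFin; apply: eq_trans (@probability_bigcap_iid k (C t) (mC t)) _.
by apply: eq_bigr => i _; rewrite Ct q_fin.
Qed.

End IidEvents.

Section Chernoff.
Variables (d : measure_display) (T : measurableType d) (R : realType).
Variables (P : probability T R) (X : nat -> {RV P >-> R}).
Hypotheses (indep : mutually_independent X) (ident : identically_distributed X).
Hypothesis X_ge0 : forall n w, 0 <= X n w.
Variables (mu s2 : R).
Hypothesis EX : ('E_P[X 0%N] = mu%:E)%E.
Hypothesis EX2 : ('E_P[(fun w => (X 0%N w ^+ 2)%R)] = s2%:E)%E.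

Let s2D1_gt0 : 0 < s2 + 1.
Proof.
have : (0 <= s2%:E)%E by rewrite -EX2 unlock; apply: integral_ge0 => w _; rewrite lee_fin sqr_ge0.
by rewrite lee_fin; lra.
Qed.

Section FixedRate.
Variable lam : R.
Hypothesis lam_gt0 : 0 < lam.

Let M := (Num.truncn (lam ^- 2)).+1.
Let phi (y : R) := expR (- (lam * y)).
Let B (j : 'I_M) : set R := phi @^-1` [set z | j%:R / M%:R <= z].
Let q := \sum_(j < M) M%:R^-1 * fine (P (X 0%N @^-1` B j)).

Let mesh_le : M%:R^-1 <= lam ^+ 2.
Proof.
have l2 : 0 <= lam ^- 2 by rewrite invr_ge0 exprn_ge0 // ltW.
have /andP[_ h] := truncn_itv l2.
rewrite -[lam ^+ 2]invrK lef_pV2 ?posrE ?ltr0n ?invr_gt0 ?exprn_gt0 //; exact: ltW.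
Qed.

Let phi_itv y : 0 <= y -> 0 <= phi y <= 1.
Proof. by move=> y0; rewrite expR_ge0 expR_le1 oppr_le0 mulr_ge0 // ltW. Qed.

Let staircase_phi_bounds y : 0 <= y ->
  phi y <= staircase M (phi y) <= phi y + M%:R^-1.
Proof. by move=> /phi_itv/andP[? ?]; exact: staircase_bounds. Qed.

Let measurable_phi : measurable_fun setT phi.
Proof.
apply: measurableT_comp; first exact: measurable_expR.
by apply: measurableT_comp; [exact: measurable_funN | exact: mulrl_measurable].
Qed.

Let measurable_B j : measurable (B j).
Proof.
rewrite /B -[X in measurable X]setTI.
by apply: (measurable_fun_le (f := cst _)) => //; exact: measurable_cst.
Qed.

Let integral_prod_staircase k :
  (\int[P]_w (\prod_(i < k) staircase M (phi (X i w)))%:E = (q ^+ k)%:E)%E.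
Proof.
under eq_integral => w _ do under eq_bigr => i _ do rewrite staircase_comp_indic.
by rewrite integral_prod_scaled_indic_iid // => j; rewrite invr_ge0.
Qed.

Let measurable_staircase i : measurable_fun setT (fun w => staircase M (phi (X i w))).
Proof.
rewrite (_ : (fun w => _) = fun w => \sum_(j < M) M%:R^-1 * \1_(X i @^-1` B j) w).
  apply: measurable_sum => j; apply: measurable_funM; first exact: measurable_cst.
  by apply: measurable_indic; exact: measurable_funPTI.
by apply/funext => w; rewrite staircase_comp_indic.
Qed.

Let staircase_ge0 i w : 0 <= staircase M (phi (X i w)).
Proof. by rewrite mulr_ge0 ?invr_ge0 ?sumr_ge0. Qed.

Let staircase_mean_le : q <= 1 - lam * mu + lam ^+ 2 * (s2 + 1).
Proof.
have Eq : (\int[P]_w (staircase M (phi (X 0%N w)))%:E = q%:E)%E.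
  by rewrite -[q]expr1 -integral_prod_staircase; apply: eq_integral => w _; rewrite big_ord1.
have EY : (\int[P]_w (X 0%N w)%:E = mu%:E)%E by rewrite -EX unlock.
have EY2 : (\int[P]_w (X 0%N w ^+ 2)%:E = s2%:E)%E by rewrite -EX2 unlock.
have dominated w : staircase M (phi (X 0%N w)) + lam * X 0%N w <=
    (1 + lam ^+ 2) + lam ^+ 2 * X 0%N w ^+ 2.
  have /andP[_ up] := staircase_phi_bounds (X_ge0 0%N w).
  have := expRN_le_quadratic (mulr_ge0 (ltW lam_gt0) (X_ge0 0%N w)).
  rewrite exprMn -/(phi _); have := mesh_le; lra.
have l2_ge0 : 0 <= lam ^+ 2 by rewrite sqr_ge0.
have := integral_le_quadratic_moments (measurable_funP (X 0%N)) (measurable_staircase 0%N)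
  (X_ge0 0%N) (staircase_ge0 0%N) (addr_ge0 ler01 l2_ge0) l2_ge0 (ltW lam_gt0) EY EY2 Eq dominated.
lra.
Qed.

Let prob_partial_sum_le_staircase k (x : R) :
  (P [set w | (partial_sum X k w <= x)%R] <= (expR (lam * x) * q ^+ k)%:E)%E.
Proof.
set S := [set w | _ <= x]; have mS : measurable S := measurable_partial_sum_le X k x.
have dominated w : \1_S w <= expR (lam * x) * \prod_(i < k) staircase M (phi (X i w)).
  rewrite indicE; case: (boolP (w \in S)) => [/set_mem wS|_]; last first.
    by rewrite mulr_ge0 ?expR_ge0 ?prodr_ge0.
  apply: (@le_trans _ _ (expR (lam * x) * \prod_(i < k) phi (X i w))).
    rewrite /phi -expR_sum -expRD sumrN -mulr_sumr -mulrBr; apply: le_trans (expR_ge1Dx _).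
    by rewrite lerDl mulr_ge0 ?subr_ge0 // ltW.
  rewrite ler_wpM2l ?expR_ge0 //; apply: ler_prod => i _.
  have /andP[phi0 _] := phi_itv (X_ge0 i w).
  by have /andP[] := staircase_phi_bounds (X_ge0 i w); rewrite phi0.
have PS : P S = (\int[P]_w (\1_S w)%:E)%E by rewrite integral_indic // setIT.
have mprod : measurable_fun setT (fun w => \prod_(i < k) staircase M (phi (X i w))).
  by apply: measurable_prod => i _; exact: measurable_staircase.
rewrite PS; apply: (@le_trans _ _
  (\int[P]_w (expR (lam * x) * \prod_(i < k) staircase M (phi (X i w)))%:E)%E).
  apply: ge0_le_integral => //.
  - by apply/measurable_EFinP; exact: measurable_indic.
  - apply/measurable_EFinP; apply: measurable_funM => //; exact: measurable_cst.
  - by move=> w _; rewrite lee_fin dominated.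
under eq_integral => w _ do rewrite EFinM.
rewrite ge0_integralZl ?lee_fin ?expR_ge0 //.
- by rewrite integral_prod_staircase -EFinM.
- exact/measurable_EFinP.
- by move=> w _; rewrite lee_fin prodr_ge0.
Qed.

Lemma prob_partial_sum_le_expR k (x : R) :
  (P [set w | (partial_sum X k w <= x)%R] <=
    (expR (lam * x + k%:R * (lam ^+ 2 * (s2 + 1) - lam * mu)))%:E)%E.
Proof.
apply: le_trans (prob_partial_sum_le_staircase k x) _.
rewrite lee_fin expRD expRM_natl ler_wpM2l ?expR_ge0 //.
apply: lerXn2r; rewrite ?nnegrE ?expR_ge0 //.
  apply: sumr_ge0 => j _; rewrite mulr_ge0 ?invr_ge0 //.
  by apply: fine_ge0; exact: measure_ge0.
apply: le_trans staircase_mean_le _.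
by have := expR_ge1Dx (lam ^+ 2 * (s2 + 1) - lam * mu); lra.
Qed.

End FixedRate.

Lemma prob_partial_sum_le_gauss (k : nat) (x : R) : (0 < k)%N -> x < k%:R * mu ->
  (P [set w | (partial_sum X k w <= x)%R] <=
    (expR (- ((k%:R * mu - x) ^+ 2 / (4 * k%:R * (s2 + 1)))))%:E)%E.
Proof.
move=> k_gt0 x_lt; set t := k%:R * mu - x.
have k_pos : 0 < k%:R :> R by rewrite ltr0n.
have t_pos : 0 < t by rewrite subr_gt0.
pose lam := t / (2 * k%:R * (s2 + 1)).
have lam_gt0 : 0 < lam by rewrite divr_gt0 // !mulr_gt0.
apply: le_trans (prob_partial_sum_le_expR lam_gt0 k x) _; rewrite lee_fin ler_expR le_eqVlt.
apply/orP; left; apply/eqP; rewrite /lam /t; field.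
by rewrite !gt_eqF.
Qed.

Hypothesis mu_gt0 : 0 < mu.
Variable delta : R.
Hypothesis delta_gt0 : 0 < delta.

Lemma renewal_upper_tail (x u : R) : 0 <= x -> 0 <= u -> u <= delta * x ->
  (P [set w | (renewal_count X x w - (x / mu)%:E > u%:E)%E] <=
    (expR (renewal_rate mu (s2 + 1) delta * delta ^+ 2) *
     expR (- (renewal_rate mu (s2 + 1) delta * u ^+ 2 / x)))%:E)%E.
Proof.
move=> x0 u0 ux; set c := renewal_rate mu (s2 + 1) delta.
have c_gt0 : 0 < c by exact: renewal_rate_gt0.
have y0 : 0 <= x / mu + u by rewrite addr_ge0 // divr_ge0 // ltW.
have -> : [set w | (u%:E < renewal_count X x w - (x / mu)%:E)%E] =
    [set w | ((x / mu + u)%:E < renewal_count X x w)%E].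
  by apply/seteqP; split => w /=; case: (renewal_count X x w) => [r| |] //=;
    rewrite ?lte_fin ?ltry //; lra.
rewrite renewal_count_gtE //; set k := (Num.truncn _).+1.
have /andP[trunc_le k_gt] := truncn_itv y0; rewrite -/k in k_gt.
have k_le : k%:R <= x / mu + u + 1 by rewrite -natr1 lerD2r.
rewrite -expRD; have : 0 <= c * delta ^+ 2 by rewrite mulr_ge0 ?sqr_ge0 // ltW.
case: (ltrP x 1) => [x_lt1 | x_ge1] cd_ge0.
  apply: le_trans (probability_le1 P (measurable_partial_sum_le X k x)) _.
  rewrite lee_fin; apply: le_trans (expR_ge1Dx _); rewrite lerDl subr_ge0 -mulrA.
  apply: ler_wpM2l; first exact: ltW.
  by apply: sqr_div_le_small; rewrite ?x0 ?u0 ?ux ?ltW.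
apply: le_trans (prob_partial_sum_le_gauss (ltn0Sn _) _) _.
  have : x / mu < k%:R by lra.
  by rewrite ltr_pdivrMr.
have := renewal_exponent_le mu_gt0 s2D1_gt0 delta_gt0 x_ge1 u0 ux k_gt k_le.
by rewrite -/c -/k lee_fin ler_expR; lra.
Qed.

End Chernoff.

Theorem lemmaA9 (d : measure_display) (T : measurableType d) (R : realType)
  (P : probability T R) (X : nat -> {RV P >-> R}) :
  mutually_independent X ->
  identically_distributed X ->
  (forall n w, 0 <= X n w) ->
  ('E_P[X 0%N] > 0)%E ->
  ('E_P[(fun w => (X 0%N w ^+ 2)%R)] < +oo)%E ->
  forall delta : R, 0 < delta ->
  exists C c : R, 0 < C /\ 0 < c /\
    forall x u : R, 0 <= x -> 0 <= u -> u <= delta * x ->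
      (P [set w | (renewal_count X x w - (x / fine 'E_P[X 0%N])%:E > u%:E)%E]
        <= (C * expR (- (c * u ^+ 2 / x)))%:E)%E.
Proof.
move=> indep ident X_ge0 EX_gt0 EX2_lt delta delta_gt0.
have mX0 : measurable_fun setT (X 0%N) := measurable_funP (X 0%N).
have EX2_ge0 : (0 <= 'E_P[(fun w => (X 0%N w ^+ 2)%R)])%E.
  by rewrite unlock; apply: integral_ge0 => w _; rewrite lee_fin sqr_ge0.
have [s2 EX2] : exists s2 : R, ('E_P[(fun w => (X 0%N w ^+ 2)%R)] = s2%:E)%E.
  by exists (fine 'E_P[(fun w => (X 0%N w ^+ 2)%R)]); rewrite fineK // ge0_fin_numE.
have [mu EX] : exists mu : R, ('E_P[X 0%N] = mu%:E)%E.
  exists (fine 'E_P[X 0%N]); rewrite fineK // ge0_fin_numE ?ltW //.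
  by apply: le_lt_trans (expectation_le_1Dsqr P mX0 (X_ge0 0%N)) _; rewrite EX2 ltry.
have mu_gt0 : 0 < mu by rewrite -lte_fin -EX.
have s2D1_gt0 : 0 < s2 + 1 by move: EX2_ge0; rewrite EX2 lee_fin; lra.
rewrite EX /=; set c := renewal_rate mu (s2 + 1) delta.
exists (expR (c * delta ^+ 2)), c; split; first exact: expR_gt0.
split; first exact: renewal_rate_gt0.
by move=> x u x0 u0 ux; exact: renewal_upper_tail.
Qed.
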